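(* Let $n=d_z\le d=d_x$. Suppose that for every $\theta\in\Theta$: $f_\theta:\mathcal{X}\to\mathbb{R}^n$ is differentiable, surjective onto $\mathbb{R}^n$, and its Jacobian has full rank $n$ everywhere; and there exist $2n+1$ points $y^0,\dots,y^{2n}\in\mathcal{Y}$ such that the $2n\times 2n$ matrix $\tilde R_\theta=\big(\tilde g_\theta(y^1)-\tilde g_\theta(y^0),\dots,\tilde g_\theta(y^{2n})-\tilde g_\theta(y^0)\big)$ is invertible. Then for any $\theta,\theta'\in\Theta$, if $\tilde p_\theta(x\mid y)=\tilde p_{\theta'}(x\mid y)$ for all $x,y$, there exist a permutation $\sigma$ of $\{1,\dots,n\}$, nonzero scalars $a_i$ and scalars $c_i$ such that $f_{i,\theta}(x)=a_if_{\sigma(i),\theta'}(x)+c_i$ for all $i$ and all $x\in\mathcal{X}$.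
   Context: Let $\mathcal{X}\subset\mathbb{R}^{d_x}$, $\mathcal{Y}\subset\mathbb{R}^{d_y}$. A parameter set $\Theta$ indexes pairs $f_\theta=(f_{1,\theta},\dots,f_{n,\theta}):\mathcal{X}\to\mathbb{R}^{n}$ and $\tilde g_\theta:\mathcal{Y}\to\mathbb{R}^{2n}$. The augmented feature map is $\tilde f_\theta(x)=(f_{1,\theta}(x),f_{1,\theta}(x)^2,\dots,f_{n,\theta}(x),f_{n,\theta}(x)^2)\in\mathbb{R}^{2n}$, and the augmented conditional energy model is $\tilde p_\theta(x\mid y)=\exp(-\tilde f_\theta(x)^\top\tilde g_\theta(y))/\tilde Z(y;\theta)$, where $\Theta$ is such that $\tilde Z(y;\theta)=\int_{\mathcal{X}}\exp(-\tilde f_\theta(x)^\top\tilde g_\theta(y))\,dx<\infty$ for all $y$. *)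

(* classical reals. Vectors of R^m are modelled as nat -> R,
   only the coordinates 0..m-1 being meaningful. *)
From Stdlib Require Import Reals.
Open Scope R_scope.

Definition vec := nat -> R.

Fixpoint rsum (m : nat) (f : nat -> R) : R :=
  match m with
  | O => 0
  | S k => rsum k f + f k
  end.

Definition norm1 (m : nat) (h : vec) : R := rsum m (fun j => Rabs (h j)).

Definition in_Rm (m : nat) (v : vec) : Prop := forall j, (m <= j)%nat -> v j = 0.

Definition has_gradient (d : nat) (F : vec -> R) (x : vec) (L : vec) : Prop :=
  forall eps, eps > 0 -> exists delta, delta > 0 /\
    forall h, in_Rm d h -> norm1 d h < delta ->
      Rabs (F (fun j => x j + h j) - F x - rsum d (fun j => L j * h j))
        <= eps * norm1 d h.

Definition full_row_rank (n d : nat) (J : nat -> vec) : Prop :=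
  forall c : vec, (forall j, (j < d)%nat -> rsum n (fun i => c i * J i j) = 0) ->
    forall i, (i < n)%nat -> c i = 0.

(* m x m matrices as nat -> nat -> R (row, column). *)
Definition mat := nat -> nat -> R.

Definition mat_mul (m : nat) (A B : mat) : mat :=
  fun i k => rsum m (fun j => A i j * B j k).

Definition is_identity (m : nat) (A : mat) : Prop :=
  forall i k, (i < m)%nat -> (k < m)%nat -> A i k = if Nat.eqb i k then 1 else 0.

Definition invertible (m : nat) (A : mat) : Prop :=
  exists B : mat, is_identity m (mat_mul m A B) /\ is_identity m (mat_mul m B A).

(* Augmented feature map: (f_1, f_1^2, ..., f_n, f_n^2), 0-indexed:
   component 2i is f_i, component 2i+1 is f_i^2. *)
Definition aug (fx : vec) : vec :=
  fun k => if Nat.even k then fx (Nat.div2 k) else (fx (Nat.div2 k)) ^ 2.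

Definition Rtilde (gt : vec -> vec) (ys : nat -> vec) : mat :=
  fun r k => gt (ys (S k)) r - gt (ys O) r.

Definition ptilde (n : nat) (fx : vec) (gy : vec) (Zy : R) : R :=
  exp (- rsum (2 * n) (fun k => aug fx k * gy k)) / Zy.

Definition is_perm (n : nat) (sigma : nat -> nat) : Prop :=
  (forall i, (i < n)%nat -> (sigma i < n)%nat) /\
  (forall i j, (i < n)%nat -> (j < n)%nat -> sigma i = sigma j -> i = j).

(* Taking logarithms in p~_theta = p~_theta' shows that, for every y, the energy
   <f~_theta(x), g~_theta(y)> differs from <f~_theta'(x), g~_theta'(y)> by a
   constant. Differencing at y^0, ..., y^2n and inverting R~_theta, every
   coordinate of f~_theta(x), i.e. both f_i and f_i^2, is an affine function of
   f~_theta'(x), hence a polynomial of degree <= 2 in z = f_theta'(x) with no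
   mixed terms. Since z ranges over all of R^n, squaring the polynomial for f_i
   and comparing with the one for f_i^2 kills its quadratic terms and all but
   one of its linear terms: f_i = a_i z_sigma(i) + c_i. Surjectivity of f_theta
   forces a_i <> 0 and sigma injective. *)
From Stdlib Require Import Reals Lra Lia Psatz Classical ClassicalEpsilon.
Open Scope R_scope.

Lemma rsum_ext m (F G : nat -> R) :
  (forall k, (k < m)%nat -> F k = G k) -> rsum m F = rsum m G.
Proof.
  induction m as [|m IH]; intros H; simpl; [reflexivity|].
  rewrite IH, H by (try intros; try apply H; lia); reflexivity.
Qed.

Lemma rsum_plus m (F G : nat -> R) :
  rsum m (fun k => F k + G k) = rsum m F + rsum m G.
Proof. induction m as [|m IH]; simpl; [ring|]. rewrite IH; ring. Qed.

Lemma rsum_mult_r m (F : nat -> R) c : rsum m F * c = rsum m (fun k => F k * c).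
Proof. induction m as [|m IH]; simpl; [ring|]. rewrite <- IH; ring. Qed.

Lemma rsum_mult_l m (F : nat -> R) c : c * rsum m F = rsum m (fun k => c * F k).
Proof. induction m as [|m IH]; simpl; [ring|]. rewrite <- IH; ring. Qed.

Lemma rsum_comm m p (F : nat -> nat -> R) :
  rsum m (fun k => rsum p (fun r => F r k)) = rsum p (fun r => rsum m (fun k => F r k)).
Proof.
  induction m as [|m IH]; simpl.
  - induction p as [|p IHp]; simpl; [ring|]. rewrite <- IHp; ring.
  - rewrite IH, <- rsum_plus; reflexivity.
Qed.

Lemma rsum_eq0 m (F : nat -> R) : (forall k, (k < m)%nat -> F k = 0) -> rsum m F = 0.
Proof. intros H. rewrite (rsum_ext m F (fun _ => 0 * 0)) by (intros; rewrite H by lia; ring).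
  rewrite <- rsum_mult_r; ring. Qed.

Lemma rsum_single m j (F : nat -> R) : (j < m)%nat ->
  (forall k, (k < m)%nat -> k <> j -> F k = 0) -> rsum m F = F j.
Proof.
  induction m as [|m IH]; intros Hj H; [lia|]; simpl.
  destruct (Nat.eq_dec j m) as [->|Hjm].
  - rewrite rsum_eq0 by (intros; apply H; lia); ring.
  - rewrite IH, (H m) by (intros; try apply H; lia); ring.
Qed.

Lemma rsum_two m j k (F : nat -> R) : (j < m)%nat -> (k < m)%nat -> j <> k ->
  (forall l, (l < m)%nat -> l <> j -> l <> k -> F l = 0) -> rsum m F = F j + F k.
Proof.
  induction m as [|m IH]; intros Hj Hk Hjk H; [lia|]; simpl.
  destruct (Nat.eq_dec j m) as [->|Hjm]; [|destruct (Nat.eq_dec k m) as [->|Hkm]].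
  - rewrite (rsum_single m k) by (intros; try apply H; lia); ring.
  - rewrite (rsum_single m j) by (intros; try apply H; lia); ring.
  - rewrite IH, (H m) by (intros; try apply H; lia); ring.
Qed.

Lemma rsum_double n (F : nat -> R) :
  rsum (2 * n) F = rsum n (fun m => F (2 * m)%nat + F (S (2 * m))).
Proof.
  induction n as [|n IH]; [reflexivity|].
  replace (2 * S n)%nat with (S (S (2 * n))) by lia.
  change (rsum (S (S (2 * n))) F) with (rsum (2 * n) F + F (2 * n)%nat + F (S (2 * n))).
  rewrite IH; simpl; ring.
Qed.

Lemma aug_even (z : vec) m : aug z (2 * m)%nat = z m.
Proof. unfold aug. rewrite Nat.even_even, Nat.div2_double; reflexivity. Qed.

Lemma aug_odd (z : vec) m : aug z (S (2 * m)) = z m ^ 2.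
Proof.
  unfold aug. rewrite Nat.even_succ, Nat.odd_mul, Nat.odd_2, Nat.div2_succ_double.
  reflexivity.
Qed.

(* The general linear combination of the coordinates of aug z: a polynomial of
   degree <= 2 in z without mixed terms. *)
Definition aug_poly (n : nat) (al z : vec) : R := rsum (2 * n) (fun s => al s * aug z s).

Lemma aug_polyE n al z :
  aug_poly n al z = rsum n (fun m => al (2 * m)%nat * z m + al (S (2 * m)) * z m ^ 2).
Proof.
  unfold aug_poly. rewrite rsum_double.
  apply rsum_ext; intros; rewrite aug_even, aug_odd; reflexivity.
Qed.

Lemma aug_poly_ext n al (z z' : vec) :
  (forall i, (i < n)%nat -> z i = z' i) -> aug_poly n al z = aug_poly n al z'.
Proof. intros Hz. rewrite !aug_polyE. apply rsum_ext; intros; rewrite Hz by lia; reflexivity. Qed.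

Definition unit_vec (j : nat) (t : R) : vec := fun m => if Nat.eqb m j then t else 0.

Definition unit_vec2 (j k : nat) (t s : R) : vec :=
  fun m => if Nat.eqb m j then t else if Nat.eqb m k then s else 0.

Lemma aug_poly_unit_vec n al j t : (j < n)%nat ->
  aug_poly n al (unit_vec j t) = al (2 * j)%nat * t + al (S (2 * j)) * t ^ 2.
Proof.
  intros Hj. rewrite aug_polyE, (rsum_single n j); unfold unit_vec.
  - rewrite Nat.eqb_refl; reflexivity.
  - exact Hj.
  - intros k _ Hkj. apply Nat.eqb_neq in Hkj. rewrite Hkj; ring.
Qed.

Lemma aug_poly_unit_vec2 n al j k t s : (j < n)%nat -> (k < n)%nat -> j <> k ->
  aug_poly n al (unit_vec2 j k t s) =
  al (2 * j)%nat * t + al (S (2 * j)) * t ^ 2 + (al (2 * k)%nat * s + al (S (2 * k)) * s ^ 2).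
Proof.
  intros Hj Hk Hjk. rewrite aug_polyE, (rsum_two n j k) by
    (assumption || (intros l _ Hlj Hlk; unfold unit_vec2;
     apply Nat.eqb_neq in Hlj, Hlk; rewrite Hlj, Hlk; ring)).
  unfold unit_vec2. rewrite Nat.eqb_refl.
  assert (Hkj : Nat.eqb k j = false) by (apply Nat.eqb_neq; auto).
  rewrite Hkj, Nat.eqb_refl; reflexivity.
Qed.

(* The t^4 coefficient of the left-hand side is B^2. *)
Lemma quadratic_sq_quadratic_lead_eq0 (A B C A' B' C' : R) :
  (forall t, (A * t + B * t ^ 2 + C) ^ 2 = A' * t + B' * t ^ 2 + C') -> B = 0.
Proof.
  intros H. pose proof (H 0); pose proof (H 1); pose proof (H 2);
  pose proof (H 3); pose proof (H 4).
  assert (B * B = 0) by nra. nra.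
Qed.

(* The t s coefficient of the left-hand side is 2 A B. *)
Lemma affine2_sq_separable_cross_eq0 (A B C D E F G H : R) :
  (forall t s, (A * t + B * s + C) ^ 2 = D * t + E * t ^ 2 + F * s + G * s ^ 2 + H) ->
  A * B = 0.
Proof.
  intros K. pose proof (K 0 0); pose proof (K 1 0); pose proof (K 0 1);
  pose proof (K 1 1); pose proof (K (-1) 0); pose proof (K 0 (-1)). nra.
Qed.

Section SquareOfAugPoly.

Variables (n : nat) (al al' : vec) (c c' : R).
Hypothesis Hsq : forall z, (aug_poly n al z + c) ^ 2 = aug_poly n al' z + c'.

Lemma aug_poly_sq_square_coef_eq0 j : (j < n)%nat -> al (S (2 * j)) = 0.
Proof.
  intros Hj. apply (quadratic_sq_quadratic_lead_eq0 (al (2 * j)%nat) _ c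
    (al' (2 * j)%nat) (al' (S (2 * j))) c').
  intros t. pose proof (Hsq (unit_vec j t)) as H.
  rewrite !aug_poly_unit_vec in H by exact Hj. exact H.
Qed.

Lemma aug_poly_sq_cross_eq0 j k : (j < n)%nat -> (k < n)%nat -> j <> k ->
  al (2 * j)%nat * al (2 * k)%nat = 0.
Proof.
  intros Hj Hk Hjk. apply (affine2_sq_separable_cross_eq0 _ _ c
    (al' (2 * j)%nat) (al' (S (2 * j))) (al' (2 * k)%nat) (al' (S (2 * k))) c').
  intros t s. pose proof (Hsq (unit_vec2 j k t s)) as H.
  rewrite !aug_poly_unit_vec2 in H by assumption.
  rewrite (aug_poly_sq_square_coef_eq0 j), (aug_poly_sq_square_coef_eq0 k) in H
    by assumption.
  replace (al (2 * j)%nat * t + al (2 * k)%nat * s + c) with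
    (al (2 * j)%nat * t + 0 * t ^ 2 + (al (2 * k)%nat * s + 0 * s ^ 2) + c) by ring.
  rewrite H; ring.
Qed.

Lemma aug_poly_sq_single_var : (0 < n)%nat ->
  exists m, (m < n)%nat /\ forall z, aug_poly n al z = al (2 * m)%nat * z m.
Proof.
  intros Hn.
  assert (Hpoly : forall m z, (m < n)%nat ->
            (forall k, (k < n)%nat -> k <> m -> al (2 * k)%nat = 0) ->
            aug_poly n al z = al (2 * m)%nat * z m).
  { intros m z Hm Hzero. rewrite aug_polyE, (rsum_single n m) by
      (assumption || (intros k Hk Hkm;
       rewrite Hzero, aug_poly_sq_square_coef_eq0 by assumption; ring)).
    rewrite aug_poly_sq_square_coef_eq0 by exact Hm; ring. }
  destruct (classic (exists m, (m < n)%nat /\ al (2 * m)%nat <> 0)) as [[m [Hm Ham]]|Hall].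
  - exists m; split; [exact Hm|]. intros z; apply Hpoly; [exact Hm|].
    intros k Hk Hkm.
    destruct (Rmult_integral _ _ (aug_poly_sq_cross_eq0 k m Hk Hm Hkm)); [assumption|].
    contradiction.
  - exists 0%nat; split; [exact Hn|]. intros z; apply Hpoly; [exact Hn|].
    intros k Hk _. apply NNPP; intros Hak; apply Hall; eauto.
Qed.

End SquareOfAugPoly.

Definition affine_in (p : nat) (X : vec -> Prop) (U : vec -> vec) (F : vec -> R) : Prop :=
  exists (al : vec) (c : R), forall x, X x -> F x = rsum p (fun s => al s * U x s) + c.

Section AffineIn.

Variables (p : nat) (X : vec -> Prop) (U : vec -> vec).

Lemma affine_in_ext (F G : vec -> R) :
  (forall x, X x -> F x = G x) -> affine_in p X U F -> affine_in p X U G.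
Proof. intros E [al [c H]]. exists al, c. intros x Hx. rewrite <- E; auto. Qed.

Lemma affine_in_cst c : affine_in p X U (fun _ => c).
Proof.
  exists (fun _ => 0), c. intros x _.
  rewrite rsum_eq0 by (intros; ring); ring.
Qed.

Lemma affine_in_plus (F G : vec -> R) :
  affine_in p X U F -> affine_in p X U G -> affine_in p X U (fun x => F x + G x).
Proof.
  intros [a1 [c1 H1]] [a2 [c2 H2]]. exists (fun s => a1 s + a2 s), (c1 + c2).
  intros x Hx. rewrite H1, H2 by exact Hx.
  rewrite (rsum_ext p (fun s => (a1 s + a2 s) * U x s)
            (fun s => a1 s * U x s + a2 s * U x s)) by (intros; ring).
  rewrite rsum_plus; ring.
Qed.

Lemma affine_in_scale (F : vec -> R) k :
  affine_in p X U F -> affine_in p X U (fun x => F x * k).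
Proof.
  intros [al [c H]]. exists (fun s => al s * k), (c * k). intros x Hx.
  rewrite H, Rmult_plus_distr_r, rsum_mult_r by exact Hx.
  f_equal; apply rsum_ext; intros; ring.
Qed.

Lemma affine_in_rsum m (W : nat -> vec -> R) (b : vec) :
  (forall k, (k < m)%nat -> affine_in p X U (W k)) ->
  affine_in p X U (fun x => rsum m (fun k => W k x * b k)).
Proof.
  induction m as [|m IH]; intros H; simpl.
  - apply affine_in_cst.
  - apply affine_in_plus; [apply IH; intros; apply H; lia|].
    apply affine_in_scale, H; lia.
Qed.

End AffineIn.

Lemma ptilde_eq_energy n (u u' g g' : vec) Z Z' : Z > 0 -> Z' > 0 ->
  ptilde n u g Z = ptilde n u' g' Z' ->
  rsum (2 * n) (fun k => aug u k * g k) =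
  rsum (2 * n) (fun k => aug u' k * g' k) + (ln Z' - ln Z).
Proof.
  intros HZ HZ' E. unfold ptilde, Rdiv in E. apply (f_equal ln) in E.
  rewrite !ln_mult, !ln_Rinv, !ln_exp in E
    by (first [apply exp_pos | apply Rinv_0_lt_compat; assumption | assumption]).
  lra.
Qed.

Lemma vec_mul_right_inverse m (A B : mat) (u : vec) r :
  is_identity m (mat_mul m A B) -> (r < m)%nat ->
  rsum m (fun k => rsum m (fun l => u l * A l k) * B k r) = u r.
Proof.
  intros HAB Hr.
  transitivity (rsum m (fun l => u l * mat_mul m A B l r)).
  { rewrite (rsum_ext m _ (fun k => rsum m (fun l => u l * A l k * B k r)))
      by (intros; apply rsum_mult_r).
    rewrite rsum_comm. apply rsum_ext; intros.
    unfold mat_mul. rewrite rsum_mult_l. apply rsum_ext; intros; ring. }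
  rewrite (rsum_single m r) by
    (assumption || (intros l Hl Hlr; rewrite HAB by assumption;
     apply Nat.eqb_neq in Hlr; rewrite Hlr; ring)).
  rewrite HAB, Nat.eqb_refl by exact Hr; ring.
Qed.

Lemma affine_in_components p m X U (W G : vec -> vec) (ys : nat -> vec) :
  (forall k, (k <= m)%nat -> affine_in p X U (fun x => rsum m (fun r => W x r * G (ys k) r))) ->
  invertible m (Rtilde G ys) ->
  forall r, (r < m)%nat -> affine_in p X U (fun x => W x r).
Proof.
  intros Hform [B [HRB _]] r Hr.
  assert (Hcol : forall k, (k < m)%nat ->
            affine_in p X U (fun x => rsum m (fun l => W x l * Rtilde G ys l k))).
  { intros k Hk.
    apply (affine_in_ext p X U (fun x => rsum m (fun l => W x l * G (ys (S k)) l)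
                                         + rsum m (fun l => W x l * G (ys 0%nat) l) * -1)).
    - intros x _. rewrite rsum_mult_r, <- rsum_plus.
      apply rsum_ext; intros; unfold Rtilde; ring.
    - apply affine_in_plus; [|apply affine_in_scale]; apply Hform; lia. }
  eapply affine_in_ext; [|exact (affine_in_rsum p X U m _ (fun k => B k r) Hcol)].
  intros x _. apply vec_mul_right_inverse; assumption.
Qed.

Lemma finite_choice {A : Type} (a0 : A) n (P : nat -> A -> Prop) :
  (forall i, (i < n)%nat -> exists a, P i a) ->
  exists g : nat -> A, forall i, (i < n)%nat -> P i (g i).
Proof.
  intros H. exists (fun i => epsilon (inhabits a0) (P i)).
  intros i Hi. apply epsilon_spec, H, Hi.
Qed.

Section AugmentedFeatures.

Variables (n : nat) (X : vec -> Prop) (f f' : vec -> vec).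
Hypothesis Hf_surj : forall z : vec, exists x, X x /\ forall i, (i < n)%nat -> f x i = z i.
Hypothesis Hf'_surj : forall z : vec, exists x, X x /\ forall i, (i < n)%nat -> f' x i = z i.
Hypothesis Haug : forall r, (r < 2 * n)%nat ->
  affine_in (2 * n) X (fun x => aug (f' x)) (fun x => aug (f x) r).

Lemma coordinate_affine i : (i < n)%nat ->
  exists m, (m < n)%nat /\ exists a c, a <> 0 /\ forall x, X x -> f x i = a * f' x m + c.
Proof.
  intros Hi.
  destruct (Haug (2 * i)%nat) as [al [c Hal]]; [lia|].
  destruct (Haug (S (2 * i))) as [al' [c' Hal']]; [lia|].
  assert (Hrep : forall x, X x -> f x i = aug_poly n al (f' x) + c).
  { intros x Hx. rewrite <- (aug_even (f x) i), Hal by exact Hx; reflexivity. }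
  assert (Hsq : forall z, (aug_poly n al z + c) ^ 2 = aug_poly n al' z + c').
  { intros z. destruct (Hf'_surj z) as [x [Hx Hz]].
    rewrite <- !(aug_poly_ext n _ _ _ Hz), <- Hrep by exact Hx.
    rewrite <- aug_odd, Hal' by exact Hx; reflexivity. }
  destruct (aug_poly_sq_single_var n al al' c c' Hsq ltac:(lia)) as [m [Hm Hsingle]].
  exists m; split; [exact Hm|]. exists (al (2 * m)%nat), c; split.
  - intros Ha0. destruct (Hf_surj (fun _ => c + 1)) as [x [Hx Hz]].
    specialize (Hz i Hi). rewrite Hrep, Hsingle, Ha0 in Hz by exact Hx. lra.
  - intros x Hx. rewrite Hrep, Hsingle by exact Hx; reflexivity.
Qed.

(* Two coordinates of the surjective f cannot both be affine in the same
   coordinate of f': prescribe f_i so that this coordinate is 0, then f_j is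
   pinned to c_j, which f_j can avoid. *)
Lemma affine_relation_injective (sigma : nat -> nat) (a c : vec) :
  (forall i, (i < n)%nat -> a i <> 0 /\ forall x, X x -> f x i = a i * f' x (sigma i) + c i) ->
  forall i j, (i < n)%nat -> (j < n)%nat -> sigma i = sigma j -> i = j.
Proof.
  intros Hrel i j Hi Hj Hs. apply NNPP; intros Hij.
  destruct (Hrel i Hi) as [Hai Hfi]. destruct (Hrel j Hj) as [_ Hfj].
  destruct (Hf_surj (unit_vec2 i j (c i) (c j + 1))) as [x [Hx Hz]].
  pose proof (Hz i Hi) as Ei. pose proof (Hz j Hj) as Ej. unfold unit_vec2 in Ei, Ej.
  rewrite Nat.eqb_refl, Hfi in Ei by exact Hx.
  assert (Hji : Nat.eqb j i = false) by (apply Nat.eqb_neq; auto).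
  rewrite Hji, Nat.eqb_refl, Hfj, <- Hs in Ej by exact Hx.
  assert (Hzero : f' x (sigma i) = 0).
  { destruct (Rmult_integral (a i) (f' x (sigma i))) as [|]; [lra|contradiction|assumption]. }
  rewrite Hzero in Ej. lra.
Qed.

Lemma exists_perm_affine : exists sigma : nat -> nat, is_perm n sigma /\
  exists a c : nat -> R, forall i, (i < n)%nat -> a i <> 0 /\
    forall x, X x -> f x i = a i * f' x (sigma i) + c i.
Proof.
  destruct (finite_choice 0%nat n _ coordinate_affine) as [sigma Hsigma].
  destruct (finite_choice 0 n _ (fun i Hi => proj2 (Hsigma i Hi))) as [a Ha].
  destruct (finite_choice 0 n _ (fun i Hi => Ha i Hi)) as [c Hc].
  assert (Hrel : forall i, (i < n)%nat -> a i <> 0 /\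
            forall x, X x -> f x i = a i * f' x (sigma i) + c i)
    by (intros i Hi; apply Hc, Hi).
  exists sigma; split.
  - split; [intros i Hi; apply Hsigma, Hi|].
    exact (affine_relation_injective sigma a c Hrel).
  - exists a, c; exact Hrel.
Qed.

End AugmentedFeatures.

Theorem mainTheorem3
  (d dy n : nat) (Hnd : (n <= d)%nat)
  (X Y : vec -> Prop)
  (HX : forall x, X x -> in_Rm d x)
  (HY : forall y, Y y -> in_Rm dy y)
  (Theta : Type)
  (f : Theta -> vec -> vec)          (* f theta x i = f_{i,theta}(x), i < n *)
  (gt : Theta -> vec -> vec)         (* gt theta y k = g~_theta(y)_k, k < 2n *)
  (Z : Theta -> vec -> R)            (* normalising constants Z~(y; theta) *)
  (HZ : forall th y, Y y -> Z th y > 0)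
  (Hdiff : forall th x, X x -> forall i, (i < n)%nat ->
             exists L, has_gradient d (fun u => f th u i) x L)
  (Hsurj : forall th (z : vec), exists x, X x /\
             forall i, (i < n)%nat -> f th x i = z i)
  (Hrank : forall th x, X x -> forall J : nat -> vec,
             (forall i, (i < n)%nat -> has_gradient d (fun u => f th u i) x (J i)) ->
             full_row_rank n d J)
  (Hvar : forall th, exists ys : nat -> vec,
             (forall k, (k <= 2 * n)%nat -> Y (ys k)) /\
             invertible (2 * n) (Rtilde (gt th) ys))
  (th th' : Theta)
  (Heq : forall x y, X x -> Y y ->
           ptilde n (f th x) (gt th y) (Z th y) = ptilde n (f th' x) (gt th' y) (Z th' y)) :
  exists sigma : nat -> nat, is_perm n sigma /\
  exists a c : nat -> R,
    forall i, (i < n)%nat -> a i <> 0 /\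
      forall x, X x -> f th x i = a i * f th' x (sigma i) + c i.
Proof.
  destruct (Hvar th) as [ys [HYs Hinv]].
  assert (Henergy : forall y, Y y -> affine_in (2 * n) X (fun x => aug (f th' x))
            (fun x => rsum (2 * n) (fun r => aug (f th x) r * gt th y r))).
  { intros y Hy. exists (gt th' y), (ln (Z th' y) - ln (Z th y)). intros x Hx.
    rewrite (ptilde_eq_energy n _ _ _ _ _ _ (HZ th y Hy) (HZ th' y Hy) (Heq x y Hx Hy)).
    f_equal; apply rsum_ext; intros; ring. }
  apply exists_perm_affine; [apply Hsurj|apply Hsurj|].
  exact (affine_in_components (2 * n) (2 * n) X _ (fun x => aug (f th x)) (gt th) ys
           (fun k Hk => Henergy (ys k) (HYs k Hk)) Hinv).
Qed.
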